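(* Consider the Popowicz system for real functions $u(x,t)$, $v(x,t)$: $$m_t + m_x(2u+v) + 3m(2u_x+v_x)=0,\qquad n_t+n_x(2u+v)+2n(2u_x+v_x)=0,\qquad m=u-u_{xx},\quad n=v-v_{xx}.$$ Let $N\ge 1$. The system admits $N$-peakon solutions of the form $$u(x,t)=\sum_{j=1}^N a_j(t)\,e^{-|x-q_j(t)|},\qquad v(x,t)=\sum_{j=1}^N b_j(t)\,e^{-|x-q_j(t)|}$$ (so that $m=2\sum_j a_j\delta(x-q_j)$, $n=2\sum_j b_j\delta(x-q_j)$), where the amplitudes $a_j,b_j$ and positions $q_j$ satisfy $$\dot a_j = 2a_j\sum_{k=1}^N(2a_k+b_k)\,\mathrm{sgn}(q_j-q_k)\,e^{-|q_j-q_k|},\qquad \dot b_j = b_j\sum_{k=1}^N(2a_k+b_k)\,\mathrm{sgn}(q_j-q_k)\,e^{-|q_j-q_k|},$$ $$\dot q_j=\sum_{k=1}^N(2a_k+b_k)\,e^{-|q_j-q_k|},\qquad j=1,\dots,N.$$ These equations form a Hamiltonian system $\dot a_j=\{a_j,h\}$, $\dot b_j=\{b_j,h\}$, $\dot q_j=\{q_j,h\}$ with Hamiltonian $h=2\sum_{j=1}^N(a_j+b_j)$ and the Poisson bracket on the $3N$-dimensional phase space with coordinates $(a_j,b_j,q_j)$ defined by $$\{a_j,a_k\}=2a_ja_k\,\mathrm{sgn}(q_j-q_k)e^{-|q_j-q_k|},\quad \{b_j,b_k\}=\tfrac12 b_jb_k\,\mathrm{sgn}(q_j-q_k)e^{-|q_j-q_k|},$$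 $$\{q_j,q_k\}=\tfrac12\mathrm{sgn}(q_j-q_k)\big(1-e^{-|q_j-q_k|}\big),\quad \{q_j,a_k\}=a_ke^{-|q_j-q_k|},\quad \{q_j,b_k\}=\tfrac12 b_ke^{-|q_j-q_k|},$$ $$\{a_j,b_k\}=a_jb_k\,\mathrm{sgn}(q_j-q_k)e^{-|q_j-q_k|},$$ for all $j,k=1,\dots,N$ (the remaining brackets being determined by antisymmetry). This Poisson bracket has the $N$ Casimirs $\mathcal C_j=a_j/b_j^2$, $j=1,\dots,N$.
   Context: The peakon functions are not smooth, so they are solutions of the system in a weak (distributional) sense, with $m,n$ measure-valued (sums of Dirac deltas). The convention $\mathrm{sgn}(0)=0$ is used, so terms with $k=j$ in the sums involving $\mathrm{sgn}(q_j-q_k)$ vanish. The Poisson bracket is extended to functions on phase space by bilinearity, antisymmetry and the Leibniz rule; a Casimir is a function $\mathcal C$ with $\{\mathcal C,F\}=0$ for every function $F$ on phase space. *)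

From Stdlib Require Import Reals List.
From Coquelicot Require Import Coquelicot.
Import ListNotations.
Open Scope R_scope.

Definition sgn (x : R) : R :=
  if Rlt_dec 0 x then 1 else if Rlt_dec x 0 then -1 else 0.

(** finite sum  sumN N f = f 0 + ... + f (N-1)  (indices j = 1..N of the
    paper are shifted to 0..N-1) *)
Fixpoint sumN (N : nat) (f : nat -> R) : R :=
  match N with O => 0 | S n => sumN n f + f n end.

Inductive coord : Type := CA (j : nat) | CB (j : nat) | CQ (j : nat).

Definition coord_eq_dec (c d : coord) : {c = d} + {c <> d}.
Proof. decide equality; apply PeanoNat.Nat.eq_dec. Defined.

(** a point of phase space; only the coordinates with index < N matter *)
Definition phase := coord -> R.

Definition coords (N : nat) : list coord :=
  flat_map (fun j => [CA j; CB j; CQ j]) (seq 0 N).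

Definition sumL (l : list coord) (f : coord -> R) : R :=
  fold_right (fun c acc => f c + acc) 0 l.

Definition upd (z : phase) (c : coord) (s : R) : phase :=
  fun d => if coord_eq_dec c d then s else z d.

Definition pd (F : phase -> R) (c : coord) (z : phase) : R :=
  Derive (fun s => F (upd z c s)) (z c).

Definition has_pd (F : phase -> R) (c : coord) (z : phase) : Prop :=
  ex_derive (fun s => F (upd z c s)) (z c).

Definition Eq (z : phase) (j k : nat) : R := exp (- Rabs (z (CQ j) - z (CQ k))).
Definition Sq (z : phase) (j k : nat) : R := sgn (z (CQ j) - z (CQ k)).

(** structure matrix { c , d }(z) of the Poisson bracket on coordinates;
    the brackets not listed in the paper are obtained by antisymmetry *)
Definition PB (z : phase) (c d : coord) : R :=
  match c, d with
  | CA j, CA k => 2 * z (CA j) * z (CA k) * Sq z j k * Eq z j k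
  | CB j, CB k => / 2 * z (CB j) * z (CB k) * Sq z j k * Eq z j k
  | CQ j, CQ k => / 2 * Sq z j k * (1 - Eq z j k)
  | CQ j, CA k => z (CA k) * Eq z j k
  | CA j, CQ k => - (z (CA j) * Eq z k j)
  | CQ j, CB k => / 2 * z (CB k) * Eq z j k
  | CB j, CQ k => - (/ 2 * z (CB j) * Eq z k j)
  | CA j, CB k => z (CA j) * z (CB k) * Sq z j k * Eq z j k
  | CB j, CA k => - (z (CA k) * z (CB j) * Sq z k j * Eq z k j)
  end.

(** extension of the bracket to functions on phase space by bilinearity,
    antisymmetry and the Leibniz rule:
    {F,G}(z) = sum_{c,d} dF/dc (z) {c,d}(z) dG/dd (z) *)
Definition pbr (N : nat) (F G : phase -> R) (z : phase) : R :=
  sumL (coords N) (fun c => sumL (coords N) (fun d =>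
    pd F c z * PB z c d * pd G d z)).

Definition cf (c : coord) : phase -> R := fun z => z c.

Definition ham (N : nat) (z : phase) : R :=
  2 * sumN N (fun j => z (CA j) + z (CB j)).

Definition casimir (j : nat) (z : phase) : R := z (CA j) / (z (CB j) ^ 2).

Definition rhs_a (N : nat) (z : phase) (j : nat) : R :=
  2 * z (CA j) * sumN N (fun k => (2 * z (CA k) + z (CB k)) * Sq z j k * Eq z j k).
Definition rhs_b (N : nat) (z : phase) (j : nat) : R :=
  z (CB j) * sumN N (fun k => (2 * z (CA k) + z (CB k)) * Sq z j k * Eq z j k).
Definition rhs_q (N : nat) (z : phase) (j : nat) : R :=
  sumN N (fun k => (2 * z (CA k) + z (CB k)) * Eq z j k).

Definition pt (a b q : nat -> R -> R) (t : R) : phase :=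
  fun c => match c with CA j => a j t | CB j => b j t | CQ j => q j t end.

Definition peak (N : nat) (c q : nat -> R -> R) (t x : R) : R :=
  sumN N (fun j => c j t * exp (- Rabs (x - q j t))).

(** its x-derivative, with the convention sgn 0 = 0 at the peaks
    (i.e. the average of the one-sided derivatives there) *)
Definition peak_x (N : nat) (c q : nat -> R -> R) (t x : R) : R :=
  sumN N (fun j => c j t * (- sgn (x - q j t)) * exp (- Rabs (x - q j t))).

(** action of the measure 2 sum_j c_j(t) delta(x - q_j(t)) on a function g *)
Definition dpair (N : nat) (c q : nat -> R -> R) (t : R) (g : R -> R) : R :=
  sumN N (fun j => 2 * c j t * g (q j t)).

Definition test_fun (M : R) (phi : R -> R) : Prop :=
  (forall k x, ex_derive_n phi k x) /\ (forall x, M < Rabs x -> phi x = 0).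

From Stdlib Require Import Reals List Lra Lia.
From Coquelicot Require Import Coquelicot.
Import ListNotations.
Open Scope R_scope.

(* A coordinate function has a Kronecker-delta gradient, so {x_c, F} = sum_d {c, d} dF/dx_d;
   Hamilton's equations and the Casimir property are then direct computations.  For the
   Jacobi identity, each structure function {c, d} is a polynomial in a_j, b_j, a_k, b_k,
   S = sgn (q_j - q_k) and E = exp (- |q_j - q_k|); away from collisions S is locally
   constant and dE = - S E (dq_j - dq_k), so {x_c, {x_d, x_e}} is explicit, and once the
   order of the three positions involved is fixed the cyclic sum is a rational identity
   in their exponentials.  For the peakons, integrating exp (- |x - q|) (phi - phi'') by
   parts on both sides of q gives 2 phi (q), i.e. (1 - d^2/dx^2) exp (- |x - q|) = 2 delta_q,
   and the weak forms of the two equations reduce at each peak to the ODEs, because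
   w = 2u + v and w_x evaluated at q_j are the sums appearing there. *)

Lemma is_derive_replace (f : R -> R) (x l l' : R) :
  is_derive f x l -> l = l' -> is_derive f x l'.
Proof. now intros H <-. Qed.

(* Coquelicot states these rules with [plus], [scal], ... of a normed module, which
   [apply] cannot unify with plain real expressions. *)
Lemma is_derive_Rplus (f g : R -> R) x df dg :
  is_derive f x df -> is_derive g x dg -> is_derive (fun s => f s + g s) x (df + dg).
Proof. exact (is_derive_plus f g x df dg). Qed.

Lemma is_derive_Rminus (f g : R -> R) x df dg :
  is_derive f x df -> is_derive g x dg -> is_derive (fun s => f s - g s) x (df - dg).
Proof. exact (is_derive_minus f g x df dg). Qed.

Lemma is_derive_Ropp (f : R -> R) x df :
  is_derive f x df -> is_derive (fun s => - f s) x (- df).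
Proof. exact (is_derive_opp f x df). Qed.

Lemma is_derive_Rmult (f g : R -> R) x df dg :
  is_derive f x df -> is_derive g x dg ->
  is_derive (fun s => f s * g s) x (df * g x + f x * dg).
Proof. intros Hf Hg. apply (is_derive_mult f g); auto. intros; apply Rmult_comm. Qed.

Lemma is_derive_exp_comp (f : R -> R) x df :
  is_derive f x df -> is_derive (fun s => exp (f s)) x (df * exp (f x)).
Proof. intros Hf. apply (is_derive_comp exp f); auto. apply is_derive_exp. Qed.

Lemma is_derive_Rconst (a x : R) : is_derive (fun _ => a) x 0.
Proof. exact (is_derive_const a x). Qed.

Lemma is_derive_Rid (x : R) : is_derive (fun s => s) x 1.
Proof. exact (is_derive_id x). Qed.

Lemma sgn_sign x : sgn x = sign x.
Proof.
  unfold sgn. destruct (Rlt_dec 0 x); [now rewrite sign_eq_1|].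
  destruct (Rlt_dec x 0); [now rewrite sign_eq_m1|].
  replace x with 0 by lra. now rewrite sign_0.
Qed.

Lemma is_derive_Rabs_comp (f : R -> R) x df :
  is_derive f x df -> f x <> 0 -> is_derive (fun s => Rabs (f s)) x (sgn (f x) * df).
Proof. intros. rewrite sgn_sign. now apply (is_derive_Rabs f). Qed.

Lemma sgn_pos x : 0 < x -> sgn x = 1.
Proof. unfold sgn; intros; destruct (Rlt_dec 0 x); lra. Qed.

Lemma sgn_neg x : x < 0 -> sgn x = -1.
Proof. unfold sgn; intros; destruct (Rlt_dec 0 x), (Rlt_dec x 0); lra. Qed.

Lemma sgn_0 : sgn 0 = 0.
Proof. unfold sgn; destruct (Rlt_dec 0 0) as [Hlt|_]; [lra | reflexivity]. Qed.

Lemma sgn_opp x : sgn (- x) = - sgn x.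
Proof.
  destruct (Rtotal_order x 0) as [H | [-> | H]].
  - rewrite (sgn_pos (- x)), (sgn_neg x); lra.
  - now rewrite Ropp_0, sgn_0, Ropp_0.
  - rewrite (sgn_neg (- x)), (sgn_pos x); lra.
Qed.

Lemma sgn_plus_small D h : D <> 0 -> Rabs h < Rabs D -> sgn (D + h) = sgn D.
Proof.
  intros HD Hh. apply Rabs_def2 in Hh as [Hh1 Hh2].
  destruct (Rdichotomy _ _ HD) as [Hneg | Hpos].
  - rewrite Rabs_left in Hh1, Hh2 by lra. rewrite !sgn_neg; lra.
  - rewrite Rabs_pos_eq in Hh1, Hh2 by lra. rewrite !sgn_pos; lra.
Qed.

Lemma Sq_swap z j k : Sq z k j = - Sq z j k.
Proof. unfold Sq. rewrite <- sgn_opp. f_equal; ring. Qed.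

Lemma Eq_swap z j k : Eq z k j = Eq z j k.
Proof. unfold Eq. now rewrite Rabs_minus_sym. Qed.

Lemma Sq_diag z j : Sq z j j = 0.
Proof. unfold Sq. now rewrite Rminus_diag, sgn_0. Qed.

Lemma Eq_diag z j : Eq z j j = 1.
Proof. unfold Eq. now rewrite Rminus_diag, Rabs_R0, Ropp_0, exp_0. Qed.

Lemma Sq_lt z j k : z (CQ j) < z (CQ k) -> Sq z j k = -1.
Proof. intros; apply sgn_neg; lra. Qed.

Lemma Sq_gt z j k : z (CQ k) < z (CQ j) -> Sq z j k = 1.
Proof. intros; apply sgn_pos; lra. Qed.

Lemma Eq_lt z j k : z (CQ j) < z (CQ k) -> Eq z j k = exp (z (CQ j)) / exp (z (CQ k)).
Proof.
  intros. unfold Eq, Rdiv. rewrite Rabs_left by lra.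
  rewrite <- exp_Ropp, <- exp_plus. f_equal; ring.
Qed.

Lemma Eq_gt z j k : z (CQ k) < z (CQ j) -> Eq z j k = exp (z (CQ k)) / exp (z (CQ j)).
Proof. intros. rewrite <- Eq_swap. now apply Eq_lt. Qed.

Lemma sumN_ext n f g : (forall j, (j < n)%nat -> f j = g j) -> sumN n f = sumN n g.
Proof.
  induction n as [|n IH]; intros H; simpl; auto.
  rewrite IH, H; auto; intros; apply H; lia.
Qed.

Lemma sumN_plus n f g : sumN n (fun j => f j + g j) = sumN n f + sumN n g.
Proof. induction n as [|n IH]; simpl; [ring | rewrite IH; ring]. Qed.

Lemma sumN_scal n c f : sumN n (fun j => c * f j) = c * sumN n f.
Proof. induction n as [|n IH]; simpl; [ring | rewrite IH; ring]. Qed.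

Lemma sumN_opp n f : sumN n (fun j => - f j) = - sumN n f.
Proof. induction n as [|n IH]; simpl; [ring | rewrite IH; ring]. Qed.

Lemma sumN_indicator n m (c : R) :
  (m < n)%nat -> sumN n (fun j => if PeanoNat.Nat.eq_dec j m then c else 0) = c.
Proof.
  induction n as [|n IH]; intros Hm; simpl; [lia|].
  destruct (PeanoNat.Nat.eq_dec n m) as [-> | Hn]; [|rewrite IH; [ring | lia]].
  rewrite (sumN_ext _ _ (fun j => 0 * 0)), sumN_scal; [ring|].
  intros j Hj. destruct (PeanoNat.Nat.eq_dec j m); [lia | ring].
Qed.

Lemma is_derive_sumN n (f : nat -> R -> R) df x :
  (forall j, (j < n)%nat -> is_derive (f j) x (df j)) ->
  is_derive (fun s => sumN n (fun j => f j s)) x (sumN n df).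
Proof.
  induction n as [|n IH]; intros H; simpl.
  - apply is_derive_Rconst.
  - apply is_derive_Rplus; auto.
Qed.

Lemma sumL_app l1 l2 f : sumL (l1 ++ l2) f = sumL l1 f + sumL l2 f.
Proof. induction l1 as [|c l IH]; simpl; [ring | rewrite IH; ring]. Qed.

Lemma sumL_ext l f g : (forall c, In c l -> f c = g c) -> sumL l f = sumL l g.
Proof.
  induction l as [|c l IH]; intros H; simpl; auto.
  rewrite H, IH; simpl; auto. intros; apply H; simpl; auto.
Qed.

Lemma sumL_plus l f g : sumL l (fun c => f c + g c) = sumL l f + sumL l g.
Proof. induction l as [|c l IH]; simpl; [ring | rewrite IH; ring]. Qed.

Lemma sumL_scal l a f : sumL l (fun c => a * f c) = a * sumL l f.
Proof. induction l as [|c l IH]; simpl; [ring | rewrite IH; ring]. Qed.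

Lemma sumL_eq0 l f : (forall c, In c l -> f c = 0) -> sumL l f = 0.
Proof.
  intros H. rewrite (sumL_ext l f (fun c => 0 * 0)), sumL_scal; [ring | auto].
  intros c Hc. rewrite H; [ring | auto].
Qed.

Definition kron (c d : coord) : R := if coord_eq_dec c d then 1 else 0.

Lemma kron_0_1 c d : kron c d = 0 \/ kron c d = 1.
Proof. unfold kron; destruct coord_eq_dec; auto. Qed.

Lemma sumL_kron l c X : NoDup l -> In c l -> sumL l (fun d => kron d c * X d) = X c.
Proof.
  induction l as [|d l IH]; intros Hnd Hc; [destruct Hc|]. inversion Hnd; subst; simpl.
  destruct Hc as [<- | Hc].
  - rewrite sumL_eq0.
    + unfold kron. destruct coord_eq_dec; [ring | congruence].
    + intros e He. unfold kron. destruct coord_eq_dec; [subst; contradiction | ring].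
  - rewrite IH; auto. unfold kron. destruct coord_eq_dec; [subst; contradiction | ring].
Qed.

Lemma coords_S n : coords (S n) = coords n ++ [CA n; CB n; CQ n].
Proof. unfold coords. now rewrite seq_S, flat_map_app. Qed.

Lemma sumL_coords n F :
  sumL (coords n) F = sumN n (fun m => F (CA m) + F (CB m) + F (CQ m)).
Proof. induction n as [|n IH]; auto. rewrite coords_S, sumL_app, IH. simpl. ring. Qed.

Definition idx (c : coord) : nat := match c with CA j | CB j | CQ j => j end.

Lemma in_coords n c : In c (coords n) <-> (idx c < n)%nat.
Proof.
  unfold coords. rewrite in_flat_map. split.
  - intros [j [Hj Hc]]. apply in_seq in Hj. simpl in Hc.
    destruct Hc as [<- | [<- | [<- | []]]]; simpl; lia.
  - intros H. exists (idx c). rewrite in_seq. split; [lia|].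
    destruct c; simpl; auto.
Qed.

Lemma NoDup_coords n : NoDup (coords n).
Proof.
  induction n as [|n IH]; [constructor|]. rewrite coords_S. apply NoDup_app; auto.
  - repeat constructor; simpl; intuition congruence.
  - intros c Hc Hn. apply in_coords in Hc. simpl in Hn.
    destruct Hn as [<- | [<- | [<- | []]]]; simpl in Hc; lia.
Qed.

Lemma sumL_coords_kron n c X :
  (idx c < n)%nat -> sumL (coords n) (fun d => kron d c * X d) = X c.
Proof. intros. apply sumL_kron; [apply NoDup_coords | now apply in_coords]. Qed.

(** * Brackets with coordinate functions *)

Lemma upd_eq z c s d : upd z c s d = z d + kron c d * (s - z c).
Proof. unfold upd, kron. destruct coord_eq_dec; subst; ring. Qed.

Lemma upd_at z c d : upd z c (z c) d = z d.
Proof. rewrite upd_eq. ring. Qed.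

Lemma is_derive_upd z c d : is_derive (fun s => upd z c s d) (z c) (kron c d).
Proof. unfold upd, kron. destruct coord_eq_dec; [apply is_derive_Rid | apply is_derive_Rconst]. Qed.

Lemma pd_cf z c d : pd (cf d) c z = kron c d.
Proof. apply is_derive_unique, is_derive_upd. Qed.

Lemma pbr_cf_l N c G z : (idx c < N)%nat ->
  pbr N (cf c) G z = sumL (coords N) (fun d => PB z c d * pd G d z).
Proof.
  intros Hc. unfold pbr.
  rewrite <- (sumL_coords_kron N c (fun c' => sumL (coords N) (fun d => PB z c' d * pd G d z)) Hc).
  apply sumL_ext. intros c' _. rewrite pd_cf, <- sumL_scal.
  apply sumL_ext. intros; ring.
Qed.

Lemma pbr_cf_cf N c d z : (idx c < N)%nat -> (idx d < N)%nat ->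
  pbr N (cf c) (cf d) z = PB z c d.
Proof.
  intros Hc Hd. rewrite pbr_cf_l, <- (sumL_coords_kron N d (PB z c) Hd); auto.
  apply sumL_ext. intros. rewrite pd_cf; ring.
Qed.

Lemma pd_ham N z c : (idx c < N)%nat ->
  pd (ham N) c z = match c with CQ _ => 0 | _ => 2 end.
Proof.
  intros Hc. unfold pd, ham. apply is_derive_unique.
  eapply is_derive_replace.
  - apply (is_derive_scal (fun s => sumN N (fun j => upd z c s (CA j) + upd z c s (CB j)))).
    apply (is_derive_sumN N (fun j s => upd z c s (CA j) + upd z c s (CB j))).
    intros; apply is_derive_Rplus; apply is_derive_upd.
  - unfold kron. destruct c as [m|m|m]; simpl in Hc.
    + rewrite (sumN_ext _ _ (fun j => if PeanoNat.Nat.eq_dec j m then 1 else 0)), sumN_indicator;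
        auto; [ring|]. intros j _.
      do 2 destruct coord_eq_dec; destruct PeanoNat.Nat.eq_dec; congruence || ring.
    + rewrite (sumN_ext _ _ (fun j => if PeanoNat.Nat.eq_dec j m then 1 else 0)), sumN_indicator;
        auto; [ring|]. intros j _.
      do 2 destruct coord_eq_dec; destruct PeanoNat.Nat.eq_dec; congruence || ring.
    + rewrite (sumN_ext _ _ (fun j => 0 * 0)), sumN_scal; [ring|]. intros j _.
      do 2 destruct coord_eq_dec; congruence || ring.
Qed.

Lemma hamilton_equations N z j : (j < N)%nat ->
  pbr N (cf (CA j)) (ham N) z = rhs_a N z j /\
  pbr N (cf (CB j)) (ham N) z = rhs_b N z j /\
  pbr N (cf (CQ j)) (ham N) z = rhs_q N z j.
Proof.
  intros Hj. unfold rhs_a, rhs_b, rhs_q.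
  repeat split; rewrite pbr_cf_l, sumL_coords, <- ?sumN_scal by auto;
    apply sumN_ext; intros k Hk; rewrite !pd_ham by auto; simpl;
    rewrite ?(Sq_swap z j k), ?(Eq_swap z j k); field.
Qed.

Lemma pd_casimir j z c : z (CB j) <> 0 ->
  pd (casimir j) c z = kron c (CA j) / z (CB j) ^ 2 - 2 * kron c (CB j) * z (CA j) / z (CB j) ^ 3.
Proof.
  intros Hb. unfold pd, casimir, kron. apply is_derive_unique. unfold upd.
  repeat destruct coord_eq_dec; try congruence; subst.
  all: auto_derive; [repeat split; auto; intro H; apply Hb; nra | field; auto].
Qed.

Lemma casimir_pbr N j z F : (j < N)%nat -> z (CB j) <> 0 -> pbr N (casimir j) F z = 0.
Proof.
  intros Hj Hb. unfold pbr.
  set (Y c := sumL (coords N) (fun d => PB z c d * pd F d z)).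
  rewrite (sumL_ext _ _ (fun c => kron c (CA j) * (/ z (CB j) ^ 2 * Y c)
                               + kron c (CB j) * (- 2 * z (CA j) / z (CB j) ^ 3 * Y c))).
  2:{ intros c _. rewrite pd_casimir by auto. unfold Y.
      rewrite <- !sumL_scal, <- sumL_plus. apply sumL_ext; intros; field; auto. }
  rewrite sumL_plus, !sumL_coords_kron by auto.
  unfold Y. rewrite <- !sumL_scal, <- sumL_plus.
  apply sumL_eq0. intros [k|k|k] _; simpl;
    rewrite ?(Sq_swap z j k), ?(Eq_swap z j k); field; auto.
Qed.

(** * The Jacobi identity *)

Definition PBpoly (c d : coord) (aj bj ak bk S E : R) : R :=
  match c, d with
  | CA _, CA _ => 2 * aj * ak * S * E
  | CB _, CB _ => / 2 * bj * bk * S * E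
  | CQ _, CQ _ => / 2 * S * (1 - E)
  | CQ _, CA _ => ak * E
  | CA _, CQ _ => - (aj * E)
  | CQ _, CB _ => / 2 * bk * E
  | CB _, CQ _ => - (/ 2 * bj * E)
  | CA _, CB _ => aj * bk * S * E
  | CB _, CA _ => ak * bj * S * E
  end.

Lemma PB_PBpoly z c d :
  PB z c d = PBpoly c d (z (CA (idx c))) (z (CB (idx c))) (z (CA (idx d))) (z (CB (idx d)))
                        (Sq z (idx c) (idx d)) (Eq z (idx c) (idx d)).
Proof.
  destruct c as [j|j|j], d as [k|k|k]; simpl;
    rewrite ?(Sq_swap z j k), ?(Eq_swap z j k); ring.
Qed.

(* [PBpoly c d] is affine in each argument separately, so its partial derivatives are
   differences of its values at 1 and at 0. *)
Definition PBpoly_diff c d aj bj ak bk S E daj dbj dak dbk dS dE : R :=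
    daj * (PBpoly c d 1 bj ak bk S E - PBpoly c d 0 bj ak bk S E)
  + dbj * (PBpoly c d aj 1 ak bk S E - PBpoly c d aj 0 ak bk S E)
  + dak * (PBpoly c d aj bj 1 bk S E - PBpoly c d aj bj 0 bk S E)
  + dbk * (PBpoly c d aj bj ak 1 S E - PBpoly c d aj bj ak 0 S E)
  + dS * (PBpoly c d aj bj ak bk 1 E - PBpoly c d aj bj ak bk 0 E)
  + dE * (PBpoly c d aj bj ak bk S 1 - PBpoly c d aj bj ak bk S 0).

Lemma is_derive_PBpoly c d (aj bj ak bk S E : R -> R) t daj dbj dak dbk dS dE :
  is_derive aj t daj -> is_derive bj t dbj -> is_derive ak t dak -> is_derive bk t dbk ->
  is_derive S t dS -> is_derive E t dE ->
  is_derive (fun s => PBpoly c d (aj s) (bj s) (ak s) (bk s) (S s) (E s)) t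
    (PBpoly_diff c d (aj t) (bj t) (ak t) (bk t) (S t) (E t) daj dbj dak dbk dS dE).
Proof.
  intros. destruct c, d; unfold PBpoly_diff; simpl; eapply is_derive_replace.
  all: repeat match goal with
    | |- is_derive (fun s => _ * _) _ _ => apply is_derive_Rmult
    | |- is_derive (fun s => _ - _) _ _ => apply is_derive_Rminus
    | |- is_derive (fun s => - _) _ _ => apply is_derive_Ropp
    | |- is_derive (fun s => ?a) _ _ => apply is_derive_Rconst
    | |- _ => eassumption
    end.
  all: cbv beta; field.
Qed.

Definition apart (z : phase) (j k : nat) : Prop := j = k \/ z (CQ j) <> z (CQ k).

Lemma upd_Q_diff z c s j k :
  upd z c s (CQ j) - upd z c s (CQ k)
  = (z (CQ j) - z (CQ k)) + (kron c (CQ j) - kron c (CQ k)) * (s - z c).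
Proof. rewrite !upd_eq; ring. Qed.

Lemma Sq_upd_locally_const z c j k : z (CQ j) <> z (CQ k) ->
  locally (z c) (fun s => Sq z j k = Sq (upd z c s) j k).
Proof.
  intros Hjk. set (D := z (CQ j) - z (CQ k)).
  assert (HD : D <> 0) by (unfold D; lra).
  assert (Hr : 0 < Rabs D / 2) by (apply Rabs_pos_lt in HD; lra).
  exists (mkposreal _ Hr). intros s Hs. change (Rabs (s - z c) < Rabs D / 2) in Hs.
  unfold Sq. rewrite upd_Q_diff. fold D. rewrite sgn_plus_small; auto.
  rewrite Rabs_mult.
  assert (Rabs (kron c (CQ j) - kron c (CQ k)) <= 1).
  { destruct (kron_0_1 c (CQ j)) as [-> | ->], (kron_0_1 c (CQ k)) as [-> | ->];
      unfold Rabs; destruct Rcase_abs; lra. }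
  pose proof (Rabs_pos (s - z c)). nra.
Qed.

Lemma is_derive_Sq_upd z c j k : apart z j k ->
  is_derive (fun s => Sq (upd z c s) j k) (z c) 0.
Proof.
  intros [<- | Hjk].
  - eapply is_derive_ext; [|apply (is_derive_Rconst 0)]. intros s. now rewrite Sq_diag.
  - eapply is_derive_ext_loc; [now apply Sq_upd_locally_const | apply is_derive_Rconst].
Qed.

Lemma is_derive_Eq_upd z c j k : apart z j k ->
  is_derive (fun s => Eq (upd z c s) j k) (z c)
    (- Sq z j k * Eq z j k * (kron c (CQ j) - kron c (CQ k))).
Proof.
  intros [<- | Hjk].
  - eapply is_derive_replace.
    + eapply is_derive_ext; [|apply (is_derive_Rconst 1)]. intros s. now rewrite Eq_diag.
    + ring.
  - unfold Eq, Sq. eapply is_derive_replace.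
    + apply is_derive_exp_comp, is_derive_Ropp, is_derive_Rabs_comp.
      * eapply is_derive_ext; [intros s; symmetry; apply upd_Q_diff|].
        apply is_derive_Rplus; [apply is_derive_Rconst|].
        apply (is_derive_scal (fun s => s - z c)).
        apply is_derive_Rminus; [apply is_derive_Rid | apply is_derive_Rconst].
      * cbv beta. rewrite !upd_at. lra.
    + cbv beta. rewrite !upd_at. ring.
Qed.

Definition dPB z d e c : R :=
  let j := idx d in let k := idx e in
  PBpoly_diff d e (z (CA j)) (z (CB j)) (z (CA k)) (z (CB k)) (Sq z j k) (Eq z j k)
    (kron c (CA j)) (kron c (CB j)) (kron c (CA k)) (kron c (CB k)) 0
    (- Sq z j k * Eq z j k * (kron c (CQ j) - kron c (CQ k))).

Lemma pd_PB z d e c : apart z (idx d) (idx e) -> pd (fun w => PB w d e) c z = dPB z d e c.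
Proof.
  intros Hde. unfold pd. apply is_derive_unique.
  pose proof (is_derive_PBpoly d e _ _ _ _ _ _ _ _ _ _ _ _ _
    (is_derive_upd z c (CA (idx d))) (is_derive_upd z c (CB (idx d)))
    (is_derive_upd z c (CA (idx e))) (is_derive_upd z c (CB (idx e)))
    (is_derive_Sq_upd z c _ _ Hde) (is_derive_Eq_upd z c _ _ Hde)) as H.
  eapply is_derive_ext; [intros s; symmetry; apply PB_PBpoly|].
  eapply is_derive_replace; [exact H|].
  unfold dPB, Sq, Eq. now rewrite !upd_at.
Qed.

Definition jacobi_term z c d e : R :=
  let j := idx d in let k := idx e in
  let aj := z (CA j) in let bj := z (CB j) in let ak := z (CA k) in let bk := z (CB k) in
  let S := Sq z j k in let E := Eq z j k in
    (PBpoly d e 1 bj ak bk S E - PBpoly d e 0 bj ak bk S E) * PB z c (CA j)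
  + (PBpoly d e aj 1 ak bk S E - PBpoly d e aj 0 ak bk S E) * PB z c (CB j)
  + (PBpoly d e aj bj 1 bk S E - PBpoly d e aj bj 0 bk S E) * PB z c (CA k)
  + (PBpoly d e aj bj ak 1 S E - PBpoly d e aj bj ak 0 S E) * PB z c (CB k)
  + - S * E * (PBpoly d e aj bj ak bk S 1 - PBpoly d e aj bj ak bk S 0)
      * (PB z c (CQ j) - PB z c (CQ k)).

Lemma sumL_PB_dPB N z c d e : (idx d < N)%nat -> (idx e < N)%nat ->
  sumL (coords N) (fun f => PB z c f * dPB z d e f) = jacobi_term z c d e.
Proof.
  intros Hd He. unfold dPB, jacobi_term, PBpoly_diff. cbv zeta.
  set (j := idx d) in *. set (k := idx e) in *.
  set (p1 := PBpoly d e 1 _ _ _ _ _ - PBpoly d e 0 _ _ _ _ _).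
  set (p2 := PBpoly d e _ 1 _ _ _ _ - PBpoly d e _ 0 _ _ _ _).
  set (p3 := PBpoly d e _ _ 1 _ _ _ - PBpoly d e _ _ 0 _ _ _).
  set (p4 := PBpoly d e _ _ _ 1 _ _ - PBpoly d e _ _ _ 0 _ _).
  set (pE := PBpoly d e _ _ _ _ _ 1 - PBpoly d e _ _ _ _ _ 0).
  set (g := - Sq z j k * Eq z j k * pE).
  rewrite (sumL_ext _ _ (fun f =>
      kron f (CA j) * (p1 * PB z c f) + (kron f (CB j) * (p2 * PB z c f)
    + (kron f (CA k) * (p3 * PB z c f) + (kron f (CB k) * (p4 * PB z c f)
    + (kron f (CQ j) * (g * PB z c f) + kron f (CQ k) * (- g * PB z c f))))))).
  - rewrite !sumL_plus, !sumL_coords_kron by auto. unfold g. ring.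
  - intros f _. unfold g. ring.
Qed.

Lemma pbr_cf_pbr_cf N z c d e :
  (idx c < N)%nat -> (idx d < N)%nat -> (idx e < N)%nat -> apart z (idx d) (idx e) ->
  pbr N (cf c) (pbr N (cf d) (cf e)) z = jacobi_term z c d e.
Proof.
  intros Hc Hd He Hde. rewrite pbr_cf_l, <- (sumL_PB_dPB N z c d e) by auto.
  apply sumL_ext. intros f _. f_equal. rewrite <- pd_PB by auto.
  apply Derive_ext. intros s. now apply pbr_cf_cf.
Qed.

Ltac split_apart :=
  repeat match goal with
  | H : ?a <> ?b |- _ =>
      match type of a with R => destruct (Rdichotomy _ _ H); clear H end
  end.

Ltac expand_kernel :=
  repeat match goal with
  | H : ?z (CQ ?x) < ?z (CQ ?y) |- _ =>
      rewrite ?(Sq_lt z x y H), ?(Sq_gt z y x H), ?(Eq_lt z x y H), ?(Eq_gt z y x H); clear H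
  | H : ?z (CQ ?y) > ?z (CQ ?x) |- _ =>
      rewrite ?(Sq_lt z x y H), ?(Sq_gt z y x H), ?(Eq_lt z x y H), ?(Eq_gt z y x H); clear H
  end.

Lemma jacobi_term_cyclic z c d e :
  apart z (idx c) (idx d) -> apart z (idx d) (idx e) -> apart z (idx c) (idx e) ->
  jacobi_term z c d e + jacobi_term z d e c + jacobi_term z e c d = 0.
Proof.
  unfold apart.
  destruct c as [i|i|i], d as [j|j|j], e as [k|k|k]; simpl idx;
    intros [<- | Hij] [<- | Hjk] [Hik | Hik]; try subst; unfold jacobi_term; simpl;
    split_apart; try (exfalso; lra); expand_kernel; rewrite ?Sq_diag, ?Eq_diag;
    field; repeat split; apply Rgt_not_eq, exp_pos.
Qed.

Lemma jacobi_coords N z :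
  (forall j k, (j < N)%nat -> (k < N)%nat -> j <> k -> z (CQ j) <> z (CQ k)) ->
  forall c d e, In c (coords N) -> In d (coords N) -> In e (coords N) ->
    pbr N (cf c) (pbr N (cf d) (cf e)) z
    + pbr N (cf d) (pbr N (cf e) (cf c)) z
    + pbr N (cf e) (pbr N (cf c) (cf d)) z = 0.
Proof.
  intros Hz c d e Hc Hd He. apply in_coords in Hc, Hd, He.
  assert (Hapart : forall i j, (i < N)%nat -> (j < N)%nat -> apart z i j).
  { intros i j Hi Hj. destruct (PeanoNat.Nat.eq_dec i j); [left | right; apply Hz]; auto. }
  rewrite !pbr_cf_pbr_cf by auto. apply jacobi_term_cyclic; auto.
Qed.

(** * Peakon solutions *)

Lemma is_RInt_replace (f : R -> R) (a b l l' : R) :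
  is_RInt f a b l -> l = l' -> is_RInt f a b l'.
Proof. now intros H <-. Qed.

Lemma continuous_eq0_near (g : R -> R) x :
  continuous g x -> (forall e : posreal, exists y, Rabs (y - x) < e /\ g y = 0) -> g x = 0.
Proof.
  intros Hc Hnear. destruct (Req_dec (g x) 0) as [|Hgx]; [easy|exfalso].
  assert (Hr : 0 < Rabs (g x)) by now apply Rabs_pos_lt.
  destruct (Hc _ (locally_ball (g x) (mkposreal _ Hr))) as [e He].
  destruct (Hnear e) as [y [Hy Hgy]].
  specialize (He y Hy). change (Rabs (g y - g x) < Rabs (g x)) in He.
  rewrite Hgy, Rminus_0_l, Rabs_Ropp in He. lra.
Qed.

Lemma continuous_eq0_right (g : R -> R) x :
  continuous g x -> (forall y, x < y -> g y = 0) -> g x = 0.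
Proof.
  intros Hc Hg. apply continuous_eq0_near; auto. intros e.
  exists (x + e / 2). pose proof (cond_pos e).
  split; [rewrite Rabs_pos_eq; lra | apply Hg; lra].
Qed.

Lemma continuous_eq0_left (g : R -> R) x :
  continuous g x -> (forall y, y < x -> g y = 0) -> g x = 0.
Proof.
  intros Hc Hg. apply continuous_eq0_near; auto. intros e.
  exists (x - e / 2). pose proof (cond_pos e).
  split; [rewrite Rabs_left; lra | apply Hg; lra].
Qed.

Section TestFunction.

Variables (M : R) (phi : R -> R).
Hypothesis phi_smooth : forall k x, ex_derive_n phi k x.
Hypothesis phi_support : forall x, M < Rabs x -> phi x = 0.

Lemma is_derive_phi x : is_derive phi x (Derive phi x).
Proof. apply Derive_correct, (phi_smooth 1). Qed.

Lemma is_derive_Derive_phi x : is_derive (Derive phi) x (Derive_n phi 2 x).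
Proof. apply Derive_correct, (phi_smooth 2). Qed.

Lemma Derive_phi_support x : M < Rabs x -> Derive phi x = 0.
Proof.
  intros Hx. apply is_derive_unique. eapply is_derive_ext_loc; [|apply is_derive_Rconst].
  assert (Hr : 0 < Rabs x - M) by lra. exists (mkposreal _ Hr).
  intros y Hy. change (Rabs (y - x) < Rabs x - M) in Hy. symmetry. apply phi_support.
  pose proof (Rabs_triang_inv x y). rewrite Rabs_minus_sym in Hy. lra.
Qed.

Lemma phi_boundary : 0 <= M ->
  phi M = 0 /\ Derive phi M = 0 /\ phi (- M) = 0 /\ Derive phi (- M) = 0.
Proof.
  intros HM.
  assert (Hc0 : forall x, continuous phi x)
    by (intros; apply (ex_derive_continuous phi), (phi_smooth 1)).
  assert (Hc1 : forall x, continuous (Derive phi) x)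
    by (intros; apply (ex_derive_continuous (Derive phi)), (phi_smooth 2)).
  repeat split.
  - apply continuous_eq0_right; auto. intros; apply phi_support; rewrite Rabs_pos_eq; lra.
  - apply continuous_eq0_right; auto. intros; apply Derive_phi_support; rewrite Rabs_pos_eq; lra.
  - apply continuous_eq0_left; auto. intros; apply phi_support; rewrite Rabs_left; lra.
  - apply continuous_eq0_left; auto. intros; apply Derive_phi_support; rewrite Rabs_left; lra.
Qed.

Lemma is_RInt_peak_left q a b : a <= b -> (forall x, a < x < b -> x <= q) ->
  is_RInt (fun x => exp (- Rabs (x - q)) * (phi x - Derive_n phi 2 x)) a b
    (exp (b - q) * (phi b - Derive phi b) - exp (a - q) * (phi a - Derive phi a)).
Proof.
  intros Hab Hq.
  assert (Hd : forall x, is_derive (fun x => exp (x - q) * (phi x - Derive phi x)) x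
                                   (exp (x - q) * (phi x - Derive_n phi 2 x))).
  { intros x. eapply is_derive_replace.
    - apply is_derive_Rmult; [apply is_derive_exp_comp | apply is_derive_Rminus].
      + apply is_derive_Rminus; [apply is_derive_Rid | apply is_derive_Rconst].
      + apply is_derive_phi.
      + apply is_derive_Derive_phi.
    - cbv beta. ring. }
  eapply is_RInt_ext; [|apply (is_RInt_derive (fun x => exp (x - q) * (phi x - Derive phi x))
                                (fun x => exp (x - q) * (phi x - Derive_n phi 2 x)));
                        [intros; apply Hd|]].
  - intros x Hx. rewrite Rmin_left, Rmax_right in Hx by lra.
    rewrite Rabs_left1 by (specialize (Hq x Hx); lra). f_equal. f_equal. ring.
  - intros x _. apply (ex_derive_continuous (fun x => exp (x - q) * (phi x - Derive_n phi 2 x))).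
    eexists. apply is_derive_Rmult; [apply is_derive_exp_comp | apply is_derive_Rminus].
    + apply is_derive_Rminus; [apply is_derive_Rid | apply is_derive_Rconst].
    + apply is_derive_phi.
    + apply Derive_correct, (phi_smooth 3).
Qed.

Lemma is_RInt_peak_right q a b : a <= b -> (forall x, a < x < b -> q <= x) ->
  is_RInt (fun x => exp (- Rabs (x - q)) * (phi x - Derive_n phi 2 x)) a b
    (exp (q - a) * (Derive phi a + phi a) - exp (q - b) * (Derive phi b + phi b)).
Proof.
  intros Hab Hq.
  assert (Hd : forall x, is_derive (fun x => - (exp (q - x) * (Derive phi x + phi x))) x
                                   (exp (q - x) * (phi x - Derive_n phi 2 x))).
  { intros x. eapply is_derive_replace.
    - apply is_derive_Ropp, is_derive_Rmult; [apply is_derive_exp_comp | apply is_derive_Rplus].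
      + apply is_derive_Rminus; [apply is_derive_Rconst | apply is_derive_Rid].
      + apply is_derive_Derive_phi.
      + apply is_derive_phi.
    - cbv beta. ring. }
  eapply is_RInt_replace;
    [eapply is_RInt_ext; [|apply (is_RInt_derive (fun x => - (exp (q - x) * (Derive phi x + phi x)))
                                    (fun x => exp (q - x) * (phi x - Derive_n phi 2 x)));
                           [intros; apply Hd|]]|].
  - intros x Hx. rewrite Rmin_left, Rmax_right in Hx by lra.
    rewrite Rabs_pos_eq by (specialize (Hq x Hx); lra). f_equal. f_equal. ring.
  - intros x _. apply (ex_derive_continuous (fun x => exp (q - x) * (phi x - Derive_n phi 2 x))).
    eexists. apply is_derive_Rmult; [apply is_derive_exp_comp | apply is_derive_Rminus].
    + apply is_derive_Rminus; [apply is_derive_Rconst | apply is_derive_Rid].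
    + apply is_derive_phi.
    + apply Derive_correct, (phi_smooth 3).
  - change minus with Rminus. ring.
Qed.

(* Both antiderivatives are evaluated at the point [q'] of [[-M, M]] nearest to [q]; their
   difference there is the jump [2 phi q] of the derivative of [exp (- |x - q|)]. *)
Lemma is_RInt_peak q :
  is_RInt (fun x => exp (- Rabs (x - q)) * (phi x - Derive_n phi 2 x)) (- M) M (2 * phi q).
Proof.
  destruct (Rlt_or_le M 0) as [HM | HM].
  - assert (Hphi : forall x, phi x = 0)
      by (intros; apply phi_support; pose proof (Rabs_pos x); lra).
    assert (Hphi2 : forall x, Derive_n phi 2 x = 0).
    { intros. rewrite (Derive_n_ext phi (fun _ => 0)); auto. apply Derive_n_const. }
    eapply is_RInt_replace; [eapply is_RInt_ext; [|apply (is_RInt_const (- M) M 0)]|].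
    + intros x _. now rewrite Hphi, Hphi2, Rminus_0_r, Rmult_0_r.
    + rewrite Hphi. change (scal (M - - M) 0) with ((M - - M) * 0). ring.
  - destruct (phi_boundary HM) as (HpM & HdM & HpmM & HdmM).
    set (q' := Rmax (- M) (Rmin q M)).
    assert (Hq' : - M <= q' <= M) by (unfold q', Rmax, Rmin; repeat destruct Rle_dec; lra).
    assert (Hq : q' = q \/ phi q = 0 /\ phi q' = 0 /\ Derive phi q' = 0).
    { destruct (Rle_lt_dec (Rabs q) M) as [Hin | Hout].
      - left. apply Rabs_le_between in Hin. unfold q'. rewrite Rmin_left, Rmax_right; lra.
      - right. split; [now apply phi_support|].
        assert (Hend : q' = M \/ q' = - M).
        { unfold q', Rmax, Rmin. revert Hout. unfold Rabs.
          destruct Rcase_abs; repeat destruct Rle_dec; intros; auto; lra. }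
        destruct Hend as [-> | ->]; auto. }
    eapply is_RInt_replace; [eapply is_RInt_Chasles with (b := q')|].
    + apply is_RInt_peak_left; [lra|]. intros x Hx.
      unfold q', Rmax, Rmin in *; repeat destruct Rle_dec; lra.
    + apply is_RInt_peak_right; [lra|]. intros x Hx.
      unfold q', Rmax, Rmin in *; repeat destruct Rle_dec; lra.
    + change plus with Rplus. rewrite HpM, HdM, HpmM, HdmM.
      destruct Hq as [-> | (-> & -> & ->)]; [rewrite Rminus_diag, exp_0 |]; ring.
Qed.

End TestFunction.

Lemma RInt_peak_test N (c q : nat -> R -> R) t M phi : test_fun M phi ->
  RInt (fun x => peak N c q t x * (phi x - Derive_n phi 2 x)) (- M) M = dpair N c q t phi.
Proof.
  intros [Hsmooth Hsupp]. apply is_RInt_unique. induction N as [|N IH].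
  - eapply is_RInt_replace; [eapply is_RInt_ext; [|apply (is_RInt_const (- M) M 0)]|].
    + intros x _. unfold peak; simpl. ring.
    + change (scal (M - - M) 0) with ((M - - M) * 0). unfold dpair; simpl. ring.
  - eapply is_RInt_replace; [eapply is_RInt_ext;
      [|apply (is_RInt_plus _ _ _ _ _ _ IH
                 (is_RInt_scal _ _ _ (c N t) _ (is_RInt_peak M phi Hsmooth Hsupp (q N t))))]|].
    + intros x _. unfold peak; simpl. change plus with Rplus. change scal with Rmult. ring.
    + unfold dpair; simpl. change plus with Rplus. change scal with Rmult. ring.
Qed.

Lemma is_derive_peak N (c q : nat -> R -> R) t x : (forall j, (j < N)%nat -> x <> q j t) ->
  is_derive (peak N c q t) x (peak_x N c q t x).
Proof.
  intros Hx. apply (is_derive_sumN N (fun j x => c j t * exp (- Rabs (x - q j t)))).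
  intros j Hj. eapply is_derive_replace.
  - apply (is_derive_scal (fun x => exp (- Rabs (x - q j t)))), is_derive_exp_comp,
      is_derive_Ropp, is_derive_Rabs_comp.
    + apply is_derive_Rminus; [apply is_derive_Rid | apply is_derive_Rconst].
    + specialize (Hx j Hj). lra.
  - cbv beta. ring.
Qed.

Lemma rhs_q_pt N a b q t j :
  rhs_q N (pt a b q t) j = 2 * peak N a q t (q j t) + peak N b q t (q j t).
Proof.
  unfold peak, rhs_q, Eq. simpl. rewrite <- sumN_scal, <- sumN_plus.
  apply sumN_ext; intros; ring.
Qed.

Lemma rhs_a_pt N a b q t j :
  rhs_a N (pt a b q t) j = - (2 * a j t * (2 * peak_x N a q t (q j t) + peak_x N b q t (q j t))).
Proof.
  unfold peak_x, rhs_a, Sq, Eq. simpl.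
  rewrite <- !sumN_scal, <- sumN_plus, <- sumN_scal, <- sumN_opp.
  apply sumN_ext; intros; ring.
Qed.

Lemma rhs_b_pt N a b q t j :
  rhs_b N (pt a b q t) j = - (b j t * (2 * peak_x N a q t (q j t) + peak_x N b q t (q j t))).
Proof.
  unfold peak_x, rhs_b, Sq, Eq. simpl.
  rewrite <- !sumN_scal, <- sumN_plus, <- sumN_scal, <- sumN_opp.
  apply sumN_ext; intros; ring.
Qed.

(* The weak form of [c_t + (c w)_x + kappa c w_x = 0] for [c = 2 sum_j c_j delta_{q_j}]. *)
Lemma is_derive_dpair_transport N (c q : nat -> R -> R) t phi (w wx : R -> R) kappa :
  (forall x, ex_derive phi x) ->
  (forall j, (j < N)%nat ->
     is_derive (c j) t (- (kappa * c j t * wx (q j t))) /\ is_derive (q j) t (w (q j t))) ->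
  is_derive (fun s => dpair N c q s phi) t
    (dpair N c q t (fun x => w x * Derive phi x) - kappa * dpair N c q t (fun x => wx x * phi x)).
Proof.
  intros Hphi Hode. unfold dpair, Rminus. rewrite <- sumN_scal, <- sumN_opp, <- sumN_plus.
  apply (is_derive_sumN N (fun j s => 2 * c j s * phi (q j s))). intros j Hj.
  destruct (Hode j Hj) as [Hc Hq]. eapply is_derive_replace.
  - apply is_derive_Rmult; [apply is_derive_Rmult; [apply is_derive_Rconst | exact Hc]|].
    apply (is_derive_comp phi (q j)); [apply Derive_correct, Hphi | exact Hq].
  - cbv beta. change scal with Rmult. ring.
Qed.

Theorem theorem1 (N : nat) (HN : (1 <= N)%nat) :
  (forall (a b q : nat -> R -> R) (t : R),
     (forall j, (j < N)%nat ->
        is_derive (a j) t (rhs_a N (pt a b q t) j) /\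
        is_derive (b j) t (rhs_b N (pt a b q t) j) /\
        is_derive (q j) t (rhs_q N (pt a b q t) j)) ->
     let u := peak N a q in
     let v := peak N b q in
     let w := fun t x => 2 * u t x + v t x in
     let wx := fun t x => 2 * peak_x N a q t x + peak_x N b q t x in
     (forall x, (forall j, (j < N)%nat -> x <> q j t) ->
        is_derive (u t) x (peak_x N a q t x) /\
        is_derive (v t) x (peak_x N b q t x)) /\
     (forall (M : R) (phi : R -> R), test_fun M phi ->
        RInt (fun x => u t x * (phi x - Derive_n phi 2 x)) (- M) M
          = dpair N a q t phi /\
        RInt (fun x => v t x * (phi x - Derive_n phi 2 x)) (- M) M
          = dpair N b q t phi /\
        is_derive (fun s => dpair N a q s phi) t
          (dpair N a q t (fun x => w t x * Derive phi x)
           - 2 * dpair N a q t (fun x => wx t x * phi x)) /\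
        is_derive (fun s => dpair N b q s phi) t
          (dpair N b q t (fun x => w t x * Derive phi x)
           - dpair N b q t (fun x => wx t x * phi x)))) /\
  (forall (z : phase) (j : nat), (j < N)%nat ->
     pbr N (cf (CA j)) (ham N) z = rhs_a N z j /\
     pbr N (cf (CB j)) (ham N) z = rhs_b N z j /\
     pbr N (cf (CQ j)) (ham N) z = rhs_q N z j) /\
  (forall (z : phase),
     (forall j k, (j < N)%nat -> (k < N)%nat -> j <> k -> z (CQ j) <> z (CQ k)) ->
     forall c d e, In c (coords N) -> In d (coords N) -> In e (coords N) ->
       pbr N (cf c) (pbr N (cf d) (cf e)) z
       + pbr N (cf d) (pbr N (cf e) (cf c)) z
       + pbr N (cf e) (pbr N (cf c) (cf d)) z = 0) /\
  (forall (j : nat), (j < N)%nat ->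
     forall (z : phase), z (CB j) <> 0 ->
     forall (F : phase -> R), (forall c, In c (coords N) -> has_pd F c z) ->
       pbr N (casimir j) F z = 0).
Proof.
  split; [|split; [|split]].
  - intros a b q t Hode u v w wx.
    assert (Htransport : forall j, (j < N)%nat ->
      is_derive (a j) t (- (2 * a j t * wx t (q j t))) /\
      is_derive (b j) t (- (1 * b j t * wx t (q j t))) /\
      is_derive (q j) t (w t (q j t))).
    { intros j Hj. destruct (Hode j Hj) as (Ha & Hb & Hq).
      rewrite rhs_a_pt in Ha; rewrite rhs_b_pt in Hb; rewrite rhs_q_pt in Hq.
      split; [exact Ha | split; [|exact Hq]].
      eapply is_derive_replace; [exact Hb | unfold wx; ring]. }
    split; [intros x Hx; split; now apply is_derive_peak|].
    intros M phi Hphi.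
    assert (Hphi' : forall x, ex_derive phi x) by apply (proj1 Hphi 1%nat).
    split; [|split; [|split]]; try now apply RInt_peak_test.
    + apply is_derive_dpair_transport; auto.
      intros j Hj. now destruct (Htransport j Hj) as (? & _ & ?).
    + rewrite <- (Rmult_1_l (dpair N b q t (fun x => wx t x * phi x))).
      apply is_derive_dpair_transport; auto.
      intros j Hj. now destruct (Htransport j Hj) as (_ & ? & ?).
  - exact (hamilton_equations N).
  - exact (jacobi_coords N).
  - intros j Hj z Hb F _. now apply casimir_pbr.
Qed.
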